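(* Let $\Phi:\mathbb R^+\to\mathbb R$ be non-decreasing and concave with $\Phi(x)/x\to0$ as $x\to\infty$ and $\int_{\mathbb R}e^{-\Phi(|x|)}dx<\infty$. Assume that in a neighbourhood of $+\infty$, $\Phi$ is $\mathcal C^2$ and there exists $\theta>1$ such that $\Phi^\theta$ is convex. Let $d\mu_\Phi(x)=Z_\Phi^{-1}e^{-\Phi(|x|)}dx$ on $\mathbb R$. Then, with $\Phi'$ the right derivative, $$\lim_{t\to0}\frac{J_{\mu_\Phi}(t)}{t\,\Phi'\circ\Phi^{-1}(\log\frac1t)}=1.$$ Consequently, if $\Phi(0)<\log2$, then $L_\Phi(t)=\min(t,1-t)\,\Phi'\circ\Phi^{-1}\big(\log\frac{1}{\min(t,1-t)}\big)$ is defined on $[0,1]$ and there exist $k_1,k_2>0$ such that $k_1L_\Phi(t)\le J_{\mu_\Phi}(t)\le k_2L_\Phi(t)$ for all $t\in[0,1]$.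
   Context: $F_\mu(x)=\mu((-\infty,x])$ and $J_\mu=F_\mu'\circ F_\mu^{-1}$ on $(0,1)$ (extended by $0$ at $0$ and $1$); $Z_\Phi$ is the normalizing constant. *)

From Stdlib Require Import Reals.
Open Scope R_scope.

(* density (unnormalised) of mu_Phi : x |-> exp(-Phi(|x|)) *)
Definition dens (Phi : R -> R) (x : R) : R := exp (- Phi (Rabs x)).

(* improper Riemann integral  int_{-oo}^x f = l *)
Definition int_lower (f : R -> R) (x l : R) : Prop :=
  forall eps, 0 < eps -> exists M, M <= x /\
    forall a (pr : Riemann_integrable f a x), a <= M -> Rabs (RiemannInt pr - l) < eps.

(* improper Riemann integral  int_R f = l *)
Definition int_full (f : R -> R) (l : R) : Prop :=
  forall eps, 0 < eps -> exists M,
    forall a b (pr : Riemann_integrable f a b), a <= - M -> M <= b ->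
      Rabs (RiemannInt pr - l) < eps.

Definition rderiv (g : R -> R) (x l : R) : Prop :=
  forall eps, 0 < eps -> exists d, 0 < d /\
    forall h, 0 < h < d -> Rabs ((g (x + h) - g x) / h - l) < eps.

(* (Phi' o Phi^{-1})(y) = l, with Phi' the right derivative and Phi^{-1}
   the inverse of Phi on R+ = [0,+oo) *)
Definition dPhi_inv (Phi : R -> R) (y l : R) : Prop :=
  exists x, 0 <= x /\ Phi x = y /\ rderiv Phi x l.

(* L_Phi(t) = L, with L_Phi(0) = L_Phi(1) = 0 (the natural value / limit) *)
Definition LPhi (Phi : R -> R) (t L : R) : Prop :=
  ((t = 0 \/ t = 1) /\ L = 0) \/
  (0 < t < 1 /\ exists l, dPhi_inv Phi (ln (/ Rmin t (1 - t))) l /\ L = Rmin t (1 - t) * l).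

From Stdlib Require Import Reals Lra Psatz Classical.
Open Scope R_scope.

(* Write T(x) for a tail mass  Z mu_Phi((-oo,-x])  or  Z mu_Phi([x,+oo)); then
   T' = -exp(-Phi) on (0,+oo) and T -> 0.  Near +oo, convexity of Phi^theta
   gives  Phi'' >= -(theta-1) Phi'^2 / Phi, so the comparison function
   h = exp(-Phi) / Phi' satisfies  h' = -exp(-Phi) (1 + Phi''/Phi'^2), and a
   monotonicity argument squeezes  (1-del) T <= h <= T  for large x: that is
   T(x) ~ exp(-Phi x)/Phi'(x).  If t = T(x)/Z and Phi(y) = log(1/t), then
   Phi(y) = Phi(x) + O(log Phi'(x)) = (1 + o(1)) Phi(x), and because
   Phi^(theta-1) Phi' is non-decreasing while Phi' is non-increasing, this forces
   Phi'(y) ~ Phi'(x).  Since J(t) = exp(-Phi x)/Z, this is J(t) ~ t Phi'(y). *)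

Lemma eq_of_close (a b : R) : (forall eps, 0 < eps -> Rabs (a - b) < eps) -> a = b.
Proof.
  intros H. destruct (Req_dec a b) as [e|n]; auto.
  assert (Hpos : 0 < Rabs (a - b)) by (apply Rabs_pos_lt; lra).
  specialize (H _ Hpos). lra.
Qed.

Lemma div_le_div (a b c d : R) : 0 < b -> 0 < d -> a * d <= c * b -> a / b <= c / d.
Proof.
  intros Hb Hd H.
  assert (E1 : a / b = a * d / (b * d)) by (field; lra).
  assert (E2 : c / d = c * b / (b * d)) by (field; lra).
  rewrite E1, E2. unfold Rdiv. apply Rmult_le_compat_r; [|lra].
  left; apply Rinv_0_lt_compat; nra.
Qed.

Lemma exp_le (a b : R) : a <= b -> exp a <= exp b.
Proof. intros [H|H]; [left; apply exp_increasing; auto|subst; lra]. Qed.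

Lemma ln_le (x y : R) : 0 < x -> x <= y -> ln x <= ln y.
Proof. intros H1 [H2|H2]; [left; apply ln_increasing; auto|subst; lra]. Qed.

Lemma ln_le_sub1 (x : R) : 0 < x -> ln x <= x - 1.
Proof. intros H. pose proof (exp_ineq1_le (ln x)). rewrite exp_ln in H0; lra. Qed.

Lemma ln_ge_1_sub_inv (x : R) : 0 < x -> 1 - / x <= ln x.
Proof.
  intros Hx. pose proof (ln_le_sub1 (/ x) ltac:(apply Rinv_0_lt_compat; lra)).
  rewrite ln_Rinv in H by lra. lra.
Qed.

Lemma ln_eventually_small (eta : R) : 0 < eta ->
  exists B, 0 < B /\ forall u, B <= u -> ln u <= eta * u.
Proof.
  intros He. assert (P4 : 0 < 4 / (eta * eta)) by (apply Rdiv_lt_0_compat; nra).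
  exists (4 / (eta * eta) + 1). split; [lra|]. intros u Hu.
  set (s := sqrt u).
  assert (Hs : s * s = u) by (unfold s; apply sqrt_sqrt; lra).
  assert (Hs0 : 0 < s) by (unfold s; apply sqrt_lt_R0; lra).
  assert (Hl : ln u = 2 * ln s) by (rewrite <- Hs, ln_mult; auto; ring).
  pose proof (ln_le_sub1 s Hs0).
  assert (E4 : eta * eta * (4 / (eta * eta)) = 4) by (field; lra).
  assert (Hes : 2 <= eta * s).
  { destruct (Rle_or_lt 2 (eta * s)) as [|Hlt]; auto.
    assert (0 < eta * s) by (apply Rmult_lt_0_compat; lra). nra. }
  rewrite Hl, <- Hs. nra.
Qed.

Lemma ratio_squeeze (E t p q a del : R) : 0 < t -> 0 < p <= q -> q * (1 - a) <= p ->
  (1 - del) * t <= E / p -> E / p <= t -> del < 1 ->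
  (1 - del) * (1 - a) <= E / (t * q) <= 1.
Proof.
  intros Ht Hpq Hqa Hlo Hhi Hdel.
  assert (Htq : 0 < t * q) by nra.
  assert (HE : E = E / p * p) by (field; lra).
  assert (Hlow : (1 - del) * (1 - a) * (t * q) <= E).
  { assert ((1 - del) * t * (q * (1 - a)) <= (1 - del) * t * p)
      by (apply Rmult_le_compat_l; nra).
    assert ((1 - del) * t * p <= E / p * p) by (apply Rmult_le_compat_r; lra).
    lra. }
  assert (Hhigh : E <= 1 * (t * q)).
  { assert (E / p * p <= t * p) by (apply Rmult_le_compat_r; lra).
    assert (t * p <= t * q) by (apply Rmult_le_compat_l; lra).
    lra. }
  split; [apply (Rmult_le_reg_r (t * q))|apply (Rmult_le_reg_r (t * q))]; auto;
    replace (E / (t * q) * (t * q)) with E by (field; lra); lra.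
Qed.

Lemma Rmin_compl_bounds (t : R) : 0 < t < 1 ->
  0 < Rmin t (1 - t) <= 1/2 /\ ln 2 <= ln (/ Rmin t (1 - t)).
Proof.
  intros Ht. pose proof (Rmin_l t (1 - t)). pose proof (Rmin_r t (1 - t)).
  assert (Hm0 : 0 < Rmin t (1 - t)) by (apply Rmin_pos; lra).
  assert (Hm1 : Rmin t (1 - t) <= 1/2) by (destruct (Rle_dec t (1/2)); lra).
  split; [lra|]. apply ln_le; [lra|].
  replace 2 with (/ (1/2)) by field. apply Rinv_le_contravar; lra.
Qed.

Lemma noninc_limit_nonneg (g : R -> R) (X : R) :
  (forall x y, X < x -> x <= y -> g y <= g x) ->
  (forall eps, 0 < eps -> exists M, forall y, M <= y -> - eps < g y) ->
  forall x, X < x -> 0 <= g x.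
Proof.
  intros Hmon Hlim x Hx. destruct (Rle_lt_dec 0 (g x)) as [|Hn]; auto. exfalso.
  destruct (Hlim (- g x) ltac:(lra)) as [M HM].
  pose proof (Rmax_l M x). pose proof (Rmax_r M x).
  specialize (HM (Rmax M x) ltac:(lra)). specialize (Hmon x (Rmax M x) Hx ltac:(lra)). lra.
Qed.

Definition slope (g : R -> R) (x y : R) : R := (g y - g x) / (y - x).

Definition concave_on (g : R -> R) (P : R -> Prop) : Prop :=
  forall x y lam, P x -> P y -> 0 <= lam <= 1 ->
    lam * g x + (1 - lam) * g y <= g (lam * x + (1 - lam) * y).

Lemma slope_right_quotient (g : R -> R) (x h : R) : 0 < h ->
  (g (x + h) - g x) / h = slope g x (x + h).
Proof. intros. unfold slope. replace (x + h - x) with h by ring. auto. Qed.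

Lemma concave_three_points (g : R -> R) (P : R -> Prop) : concave_on g P ->
  forall x y z, P x -> P z -> x < y < z ->
  (z - y) * g x + (y - x) * g z <= (z - x) * g y.
Proof.
  intros Hc x y z Px Pz Hxyz.
  set (lam := (z - y) / (z - x)).
  assert (Hl : 0 <= lam <= 1).
  { unfold lam; split.
    - apply Rmult_le_pos; [lra|left; apply Rinv_0_lt_compat; lra].
    - apply Rmult_le_reg_r with (z - x); [lra|].
      unfold Rdiv; rewrite Rmult_assoc, Rinv_l; lra. }
  specialize (Hc x z lam Px Pz Hl).
  replace (lam * x + (1 - lam) * z) with y in Hc by (unfold lam; field; lra).
  replace ((z - y) * g x + (y - x) * g z) with ((z - x) * (lam * g x + (1 - lam) * g z))
    by (unfold lam; field; lra).
  apply Rmult_le_compat_l; lra.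
Qed.

Lemma concave_slope_mono (g : R -> R) (P : R -> Prop) : concave_on g P ->
  (forall u v w, P u -> P w -> u <= v <= w -> P v) ->
  forall a b c d, P a -> P d -> a < b -> a <= c -> c < d -> b <= d ->
  slope g c d <= slope g a b.
Proof.
  intros Hc Hint a b c d Pa Pd H1 H2 H3 H4.
  assert (S1 : slope g a d <= slope g a b).
  { destruct (Req_dec b d) as [e|n]; [subst; lra|].
    pose proof (concave_three_points g P Hc a b d Pa Pd ltac:(lra)).
    unfold slope; apply div_le_div; nra. }
  assert (S2 : slope g c d <= slope g a d).
  { destruct (Req_dec a c) as [e|n]; [subst; lra|].
    pose proof (concave_three_points g P Hc a c d Pa Pd ltac:(lra)).
    unfold slope; apply div_le_div; nra. }
  lra.
Qed.

Lemma rderiv_ge (g : R -> R) (x l c : R) : rderiv g x l ->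
  (exists h0, 0 < h0 /\ forall h, 0 < h < h0 -> c <= (g (x + h) - g x) / h) -> c <= l.
Proof.
  intros Hd [h0 [Hh0 Hq]]. destruct (Rle_lt_dec c l) as [|Hlt]; auto.
  destruct (Hd (c - l)) as [d [Hd0 Hd1]]; [lra|].
  pose proof (Rmin_l d h0). pose proof (Rmin_r d h0).
  assert (0 < Rmin d h0) by (apply Rmin_pos; lra).
  specialize (Hd1 (Rmin d h0 / 2) ltac:(lra)). specialize (Hq (Rmin d h0 / 2) ltac:(lra)).
  apply Rabs_def2 in Hd1. lra.
Qed.

Lemma rderiv_le (g : R -> R) (x l c : R) : rderiv g x l ->
  (exists h0, 0 < h0 /\ forall h, 0 < h < h0 -> (g (x + h) - g x) / h <= c) -> l <= c.
Proof.
  intros Hd [h0 [Hh0 Hq]].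
  apply Ropp_le_cancel. apply (rderiv_ge (fun u => - g u) x).
  - intros eps Heps. destruct (Hd eps Heps) as [d [Hd0 Hd1]]. exists d; split; auto.
    intros h Hh. specialize (Hd1 h Hh).
    replace ((- g (x + h) - - g x) / h - - l) with (- ((g (x + h) - g x) / h - l))
      by (field; lra).
    rewrite Rabs_Ropp; auto.
  - exists h0; split; auto. intros h Hh. specialize (Hq h Hh).
    replace ((- g (x + h) - - g x) / h) with (- ((g (x + h) - g x) / h)) by (field; lra).
    lra.
Qed.

Lemma deriv_rderiv (g : R -> R) (x l : R) : derivable_pt_lim g x l -> rderiv g x l.
Proof.
  intros H eps Heps. destruct (H eps Heps) as [d Hd].
  exists d; split; [apply cond_pos|]. intros h Hh.
  apply Hd; [lra|]. rewrite Rabs_right; lra.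
Qed.

Lemma rderiv_unique (g : R -> R) (x l1 l2 : R) : rderiv g x l1 -> rderiv g x l2 -> l1 = l2.
Proof.
  intros H1 H2. apply eq_of_close. intros eps Heps.
  destruct (H1 (eps/2)) as [d1 [Hd1 Q1]]; [lra|].
  destruct (H2 (eps/2)) as [d2 [Hd2 Q2]]; [lra|].
  pose proof (Rmin_l d1 d2). pose proof (Rmin_r d1 d2).
  assert (0 < Rmin d1 d2) by (apply Rmin_pos; lra).
  specialize (Q1 (Rmin d1 d2 / 2) ltac:(lra)). specialize (Q2 (Rmin d1 d2 / 2) ltac:(lra)).
  apply Rabs_def2 in Q1. apply Rabs_def2 in Q2. apply Rabs_def1; lra.
Qed.

Lemma concave_rderiv_noninc (g : R -> R) (P : R -> Prop) : concave_on g P ->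
  (forall u v, P u -> u <= v -> P v) ->
  forall x y lx ly, P x -> x < y -> rderiv g x lx -> rderiv g y ly -> ly <= lx.
Proof.
  intros Hc Hup x y lx ly Px Hxy Hx Hy.
  assert (Hint : forall u v w, P u -> P w -> u <= v <= w -> P v)
    by (intros u v w Pu _ H; apply (Hup u); auto; lra).
  assert (Py : P y) by (apply (Hup x); auto; lra).
  apply Rle_trans with (slope g x y).
  - apply (rderiv_le g y); auto. exists 1; split; [lra|]. intros h Hh.
    rewrite slope_right_quotient by lra.
    apply (concave_slope_mono g P Hc Hint); auto; try lra. apply (Hup y); auto; lra.
  - apply (rderiv_ge g x); auto. exists (y - x); split; [lra|]. intros h Hh.
    rewrite slope_right_quotient by lra.
    apply (concave_slope_mono g P Hc Hint); auto; lra.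
Qed.

Lemma derivable_pt_lim_local (f g : R -> R) (x l r : R) : 0 < r ->
  (forall u, Rabs (u - x) < r -> f u = g u) ->
  derivable_pt_lim g x l -> derivable_pt_lim f x l.
Proof.
  intros Hr He H eps Heps. destruct (H eps Heps) as [d Hd].
  assert (Hp : 0 < Rmin d r) by (apply Rmin_pos; [apply cond_pos|lra]).
  exists (mkposreal _ Hp). intros h Hh0 Hh. simpl in Hh.
  pose proof (Rmin_l d r). pose proof (Rmin_r d r).
  rewrite (He (x + h)), (He x).
  - apply Hd; auto. lra.
  - replace (x - x) with 0 by ring; rewrite Rabs_R0; lra.
  - replace (x + h - x) with h by ring. lra.
Qed.

Lemma derivable_pt_lim_ext (f g : R -> R) (x l l' : R) :
  (forall u, f u = g u) -> l = l' -> derivable_pt_lim g x l -> derivable_pt_lim f x l'.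
Proof.
  intros Hfg Hl H eps Heps. subst. destruct (H eps Heps) as [d Hd]. exists d.
  intros h H1 H2. rewrite !Hfg. auto.
Qed.

Lemma nonpos_deriv_noninc (g g' : R -> R) (a b : R) : a <= b ->
  (forall c, a <= c <= b -> derivable_pt_lim g c (g' c)) ->
  (forall c, a <= c <= b -> g' c <= 0) -> g b <= g a.
Proof.
  intros Hab Hd Hn. destruct (Req_dec a b) as [e|n]; [subst; lra|].
  destruct (MVT_cor2 g g' a b ltac:(lra) Hd) as [c [Hc1 Hc2]].
  assert (g' c <= 0) by (apply Hn; lra). nra.
Qed.

Lemma pos_deriv_increasing (g g' : R -> R) (a b : R) : a < b ->
  (forall c, a <= c <= b -> derivable_pt_lim g c (g' c)) ->
  (forall c, a <= c <= b -> 0 < g' c) -> g a < g b.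
Proof.
  intros Hab Hd Hn.
  destruct (MVT_cor2 g g' a b Hab Hd) as [c [Hc1 Hc2]].
  assert (0 < g' c) by (apply Hn; lra). nra.
Qed.

Lemma deriv_nonpos_of_noninc (g : R -> R) (x l : R) : derivable_pt_lim g x l ->
  (forall h, 0 < h < 1 -> g (x + h) <= g x) -> l <= 0.
Proof.
  intros Hd Hm. apply (rderiv_le g x); [apply deriv_rderiv; auto|].
  exists 1; split; [lra|]. intros h Hh. specialize (Hm h Hh).
  assert (0 < / h) by (apply Rinv_0_lt_compat; lra). unfold Rdiv. nra.
Qed.

Lemma deriv_nonneg_of_nondec (g : R -> R) (x l : R) : derivable_pt_lim g x l ->
  (forall h, 0 < h < 1 -> g x <= g (x + h)) -> 0 <= l.
Proof.
  intros Hd Hm. apply (rderiv_ge g x); [apply deriv_rderiv; auto|].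
  exists 1; split; [lra|]. intros h Hh. specialize (Hm h Hh).
  apply Rmult_le_pos; [lra|]. left; apply Rinv_0_lt_compat; lra.
Qed.

Lemma RiemannInt_ge_const (f : R -> R) (a b c : R) (pr : Riemann_integrable f a b) :
  a <= b -> (forall x, a < x < b -> c <= f x) -> c * (b - a) <= RiemannInt pr.
Proof.
  intros Hab H. rewrite <- (RiemannInt_P15 (RiemannInt_P14 a b c)).
  apply RiemannInt_P19; auto.
Qed.

Lemma continuity_pt_of_eps (f : R -> R) (x : R) :
  (forall eps, 0 < eps -> exists d, 0 < d /\
     forall y, Rabs (y - x) < d -> Rabs (f y - f x) < eps) -> continuity_pt f x.
Proof.
  intros H eps Heps. destruct (H eps Heps) as [d [Hd Hy]].
  exists d; split; auto. intros y [_ Hy2]. simpl in *. unfold Rdist in *. auto.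
Qed.

Lemma dens_pos (Phi : R -> R) (x : R) : 0 < dens Phi x.
Proof. unfold dens; apply exp_pos. Qed.

Section ConcaveProfile.

Variable Phi : R -> R.
Hypothesis Hmono : forall x y, 0 <= x -> x <= y -> Phi x <= Phi y.
Hypothesis Hconc : concave_on Phi (fun x => 0 <= x).

Lemma Phi_slope_mono (a b c d : R) : 0 <= a -> a < b -> a <= c -> c < d -> b <= d ->
  slope Phi c d <= slope Phi a b.
Proof.
  intros. apply (concave_slope_mono Phi (fun x => 0 <= x) Hconc); auto; try lra.
  intros; lra.
Qed.

Lemma Phi_slope_nonneg (a b : R) : 0 <= a -> a < b -> 0 <= slope Phi a b.
Proof.
  intros H0 H1. unfold slope. apply Rmult_le_pos.
  - pose proof (Hmono a b H0 ltac:(lra)); lra.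
  - left; apply Rinv_0_lt_compat; lra.
Qed.

Lemma Phi_rderiv_le_slope (y l a : R) : 0 <= a -> a < y -> rderiv Phi y l ->
  l <= slope Phi a y.
Proof.
  intros Ha Hay Hl. apply (rderiv_le Phi y); auto.
  exists 1; split; [lra|]. intros h Hh. rewrite slope_right_quotient by lra.
  apply Phi_slope_mono; lra.
Qed.

Lemma Phi_rderiv_ge_slope (y l b : R) : 0 <= y -> y < b -> rderiv Phi y l ->
  slope Phi y b <= l.
Proof.
  intros Hy Hyb Hl. apply (rderiv_ge Phi y); auto.
  exists (b - y); split; [lra|]. intros h Hh. rewrite slope_right_quotient by lra.
  apply Phi_slope_mono; lra.
Qed.

Lemma Phi_local_lipschitz (x v : R) : 0 < x -> x / 2 <= v ->
  Rabs (Phi v - Phi x) <= slope Phi (x/2) x * Rabs (v - x).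
Proof.
  intros Hx Hv.
  destruct (Rtotal_order v x) as [Hlt|[He|Hgt]].
  - assert (S : slope Phi v x <= slope Phi (x/2) x) by (apply Phi_slope_mono; lra).
    pose proof (Hmono v x ltac:(lra) ltac:(lra)).
    assert (E : Phi x - Phi v = slope Phi v x * (x - v)) by (unfold slope; field; lra).
    rewrite !Rabs_left1 by lra.
    revert E S. generalize (slope Phi v x) (slope Phi (x/2) x). intros. nra.
  - subst. unfold Rminus. rewrite !Rplus_opp_r, Rabs_R0. lra.
  - assert (S : slope Phi x v <= slope Phi (x/2) x) by (apply Phi_slope_mono; lra).
    pose proof (Hmono x v ltac:(lra) ltac:(lra)).
    assert (E : Phi v - Phi x = slope Phi x v * (v - x)) by (unfold slope; field; lra).
    rewrite !Rabs_right by lra.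
    revert E S. generalize (slope Phi x v) (slope Phi (x/2) x). intros. nra.
Qed.

Lemma Phi_continuous_pos (x eps : R) : 0 < x -> 0 < eps -> exists d, 0 < d /\
  forall v, Rabs (v - x) < d -> Rabs (Phi v - Phi x) < eps.
Proof.
  intros Hx Heps.
  set (C := slope Phi (x/2) x).
  assert (HC : 0 <= C) by (apply Phi_slope_nonneg; lra).
  assert (Hq : 0 < eps / (C + 1)) by (apply Rdiv_lt_0_compat; lra).
  exists (Rmin (x/2) (eps / (C + 1))). split; [apply Rmin_pos; lra|].
  intros v Hv.
  pose proof (Rmin_l (x/2) (eps/(C+1))). pose proof (Rmin_r (x/2) (eps/(C+1))).
  assert (Hv2 : x / 2 <= v) by (apply Rabs_def2 in Hv; lra).
  pose proof (Phi_local_lipschitz x v Hx Hv2) as Hlip. fold C in Hlip.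
  assert (C * Rabs (v - x) <= C * (eps / (C+1))) by (apply Rmult_le_compat_l; lra).
  assert (C * (eps / (C+1)) < eps).
  { apply Rmult_lt_reg_r with (C+1); [lra|].
    replace (C * (eps / (C + 1)) * (C + 1)) with (C * eps) by (field; lra). nra. }
  lra.
Qed.

(* At a positive point the right derivative exists: it is the supremum of the
   right chord slopes, which increase as the chord shrinks. *)
Lemma Phi_rderiv_exists (x : R) : 0 < x -> exists l, rderiv Phi x l.
Proof.
  intros Hx.
  set (E := fun s => exists h, 0 < h /\ s = slope Phi x (x + h)).
  assert (Hb : bound E).
  { exists (slope Phi (x/2) x). intros s [h [Hh ->]]. apply Phi_slope_mono; lra. }
  assert (Hne : exists s, E s) by (exists (slope Phi x (x+1)); exists 1; split; [lra|auto]).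
  destruct (completeness E Hb Hne) as [m [Hub Hlub]].
  exists m. intros eps Heps.
  assert (Hex : exists s, E s /\ m - eps < s).
  { apply NNPP. intros Hn.
    assert (Hu : is_upper_bound E (m - eps)).
    { intros s Hs. destruct (Rle_lt_dec s (m - eps)); auto.
      exfalso; apply Hn; exists s; auto. }
    specialize (Hlub _ Hu). lra. }
  destruct Hex as [s [[h0 [Hh0 ->]] Hs]].
  exists h0; split; auto. intros h Hh. rewrite slope_right_quotient by lra.
  assert (S1 : slope Phi x (x + h0) <= slope Phi x (x + h)) by (apply Phi_slope_mono; lra).
  assert (S2 : slope Phi x (x + h) <= m) by (apply Hub; exists h; split; auto; lra).
  apply Rabs_def1; lra.
Qed.

Hypothesis Hcont0 : forall eps, 0 < eps -> exists d, 0 < d /\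
  forall x, 0 <= x < d -> Rabs (Phi x - Phi 0) < eps.

Lemma Phi_abs_continuous (u : R) : continuity_pt (fun v => Phi (Rabs v)) u.
Proof.
  apply continuity_pt_of_eps. intros eps Heps.
  destruct (Req_dec u 0) as [Hu|Hu].
  - subst. destruct (Hcont0 eps Heps) as [d [Hd Hx]]. exists d; split; auto.
    intros y Hy. rewrite Rabs_R0. rewrite Rminus_0_r in Hy. apply Hx.
    split; [apply Rabs_pos|auto].
  - assert (Hpos : 0 < Rabs u) by (apply Rabs_pos_lt; auto).
    destruct (Phi_continuous_pos (Rabs u) eps Hpos Heps) as [d [Hd Hv]].
    exists d; split; auto. intros y Hy. apply Hv.
    pose proof (Rabs_triang_inv2 y u). lra.
Qed.

Lemma dens_continuous (u : R) : continuity_pt (dens Phi) u.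
Proof.
  change (dens Phi) with (comp exp (fun v => - Phi (Rabs v))).
  apply continuity_pt_comp.
  - apply (continuity_pt_opp (fun v => Phi (Rabs v))). apply Phi_abs_continuous.
  - apply derivable_continuous_pt, derivable_pt_exp.
Qed.

Lemma dens_integrable (a b : R) : Riemann_integrable (dens Phi) a b.
Proof.
  destruct (Rle_dec a b).
  - apply continuity_implies_RiemannInt; auto. intros; apply dens_continuous.
  - apply RiemannInt_P1. apply continuity_implies_RiemannInt; [lra|].
    intros; apply dens_continuous.
Qed.

Variable Z : R.
Hypothesis HZ : int_full (dens Phi) Z.

Lemma Z_pos : 0 < Z.
Proof.
  set (pr := dens_integrable).
  set (I1 := RiemannInt (pr (-1) 1)).
  assert (HI1 : exp (- Phi 1) * (1 - -1) <= I1).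
  { apply RiemannInt_ge_const; [lra|]. intros u Hu. unfold dens. apply exp_le.
    apply Ropp_le_contravar. apply Hmono; [apply Rabs_pos|]. apply Rabs_le; lra. }
  assert (Hp : 0 < exp (- Phi 1)) by apply exp_pos.
  destruct (HZ (I1/2) ltac:(lra)) as [M HM].
  set (b := Rabs M + 1).
  assert (Hb : M <= b /\ 1 <= b) by (unfold b; pose proof (Rle_abs M); pose proof (Rabs_pos M); lra).
  specialize (HM (-b) b (pr (-b) b) ltac:(lra) ltac:(lra)).
  pose proof (RiemannInt_P26 (pr (-b) (-1)) (pr (-1) 1) (pr (-b) 1)) as E1.
  pose proof (RiemannInt_P26 (pr (-b) 1) (pr 1 b) (pr (-b) b)) as E2.
  assert (P1 : 0 * (-1 - - b) <= RiemannInt (pr (-b) (-1))).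
  { apply RiemannInt_ge_const; [lra|]. intros; left; apply dens_pos. }
  assert (P2 : 0 * (b - 1) <= RiemannInt (pr 1 b)).
  { apply RiemannInt_ge_const; [lra|]. intros; left; apply dens_pos. }
  apply Rabs_def2 in HM. fold I1 in E1. lra.
Qed.

(* Integrability forces Phi to be unbounded: otherwise the density would be
   bounded below by a positive constant. *)
Lemma Phi_unbounded (B : R) : exists x, 0 <= x /\ B < Phi x.
Proof.
  apply NNPP. intros Hn.
  assert (Hle : forall x, 0 <= x -> Phi x <= B).
  { intros x Hx. destruct (Rle_lt_dec (Phi x) B); auto. exfalso; apply Hn; exists x; auto. }
  destruct (HZ 1 ltac:(lra)) as [M HM].
  set (e := exp (- B)). assert (He : 0 < e) by apply exp_pos.
  assert (Hq : 0 <= (Rabs Z + 1) / e)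
    by (apply Rmult_le_pos; [pose proof (Rabs_pos Z); lra|left; apply Rinv_0_lt_compat; auto]).
  set (b := Rabs M + (Rabs Z + 1) / e).
  assert (Hb1 : M <= b) by (unfold b; pose proof (Rle_abs M); lra).
  pose proof (HM (-b) b (dens_integrable (-b) b) ltac:(lra) Hb1) as HI.
  assert (Hlow : e * (b - - b) <= RiemannInt (dens_integrable (- b) b)).
  { apply RiemannInt_ge_const; [unfold b; pose proof (Rabs_pos M); lra|].
    intros u _. unfold dens, e. apply exp_le. pose proof (Hle (Rabs u) (Rabs_pos u)). lra. }
  assert (e * ((Rabs Z + 1) / e) = Rabs Z + 1) by (field; lra).
  assert (e * b >= Rabs Z + 1) by (unfold b; pose proof (Rabs_pos M); nra).
  apply Rabs_def2 in HI. pose proof (Rle_abs Z). pose proof (Rabs_pos Z). lra.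
Qed.

Lemma Phi_eventually_large (B : R) : exists Y, 0 <= Y /\ forall y, Y <= y -> B < Phi y.
Proof.
  destruct (Phi_unbounded B) as [Y [HY HYB]].
  exists Y; split; auto. intros y Hy. pose proof (Hmono Y y HY Hy). lra.
Qed.

(* A concave non-decreasing unbounded function is strictly increasing: a flat
   chord would make all later chords non-positive. *)
Lemma Phi_strict (x y : R) : 0 <= x -> x < y -> Phi x < Phi y.
Proof.
  intros Hx Hxy.
  destruct (Hmono x y Hx ltac:(lra)) as [|He]; auto. exfalso.
  destruct (Phi_unbounded (Phi y)) as [z [Hz Hzy]].
  destruct (Rle_lt_dec z y) as [Hzl|Hzl].
  - pose proof (Hmono z y Hz Hzl). lra.
  - assert (S : slope Phi y z <= slope Phi x y) by (apply Phi_slope_mono; lra).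
    assert (E : slope Phi x y = 0) by (unfold slope; rewrite He; field; lra).
    assert (0 < slope Phi y z) by (unfold slope; apply Rdiv_lt_0_compat; lra).
    lra.
Qed.

Lemma Phi_rderiv_pos (y l : R) : 0 <= y -> rderiv Phi y l -> 0 < l.
Proof.
  intros Hy Hl.
  apply Rlt_le_trans with (slope Phi y (y + 1)); [|apply Phi_rderiv_ge_slope; auto; lra].
  unfold slope. apply Rdiv_lt_0_compat; [|lra].
  pose proof (Phi_strict y (y+1) Hy ltac:(lra)). lra.
Qed.

Lemma Phi_level_attained (c v : R) : 0 < c -> Phi c <= v ->
  exists y l, c <= y /\ Phi y = v /\ rderiv Phi y l.
Proof.
  intros Hc0 Hv.
  assert (Hy : exists y, c <= y /\ Phi y = v).
  { destruct Hv as [Hv|Hv]; [|exists c; split; auto; lra].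
    destruct (Phi_unbounded v) as [Y [HY0 HYv]].
    assert (HcY : c < Y).
    { destruct (Rle_lt_dec Y c); auto. pose proof (Hmono Y c HY0 r). lra. }
    set (f := fun u => Phi (Rabs u) - v).
    assert (Hf : continuity f).
    { intro u. apply (continuity_pt_minus (fun u => Phi (Rabs u)) (fun _ => v)).
      - apply Phi_abs_continuous.
      - apply continuity_pt_const. intros ? ?; auto. }
    destruct (IVT f c Y Hf HcY) as [z [Hz Hfz]];
      unfold f in *; rewrite ?(Rabs_right c), ?(Rabs_right Y) by lra; try lra.
    exists z. rewrite Rabs_right in Hfz by lra. split; lra. }
  destruct Hy as [y [Hcy Hyv]].
  destruct (Phi_rderiv_exists y ltac:(lra)) as [l Hl].
  exists y, l; auto.
Qed.


Variable F : R -> R.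
Hypothesis HF : forall x, int_lower (dens Phi) x (Z * F x).

Lemma F_increment (u v : R) :
  Z * F u - Z * F v = RiemannInt (dens_integrable v u).
Proof.
  apply eq_of_close. intros eps Heps.
  destruct (HF u (eps/2) ltac:(lra)) as [Mu [HMu Pu]].
  destruct (HF v (eps/2) ltac:(lra)) as [Mv [HMv Pv]].
  set (a := Rmin Mu Mv). pose proof (Rmin_l Mu Mv). pose proof (Rmin_r Mu Mv).
  specialize (Pu a (dens_integrable a u) ltac:(unfold a; lra)).
  specialize (Pv a (dens_integrable a v) ltac:(unfold a; lra)).
  pose proof (RiemannInt_P26 (dens_integrable a v) (dens_integrable v u)
     (dens_integrable a u)) as E.
  apply Rabs_def2 in Pu. apply Rabs_def2 in Pv. apply Rabs_def1; lra.
Qed.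

Lemma F_derivative (x : R) : derivable_pt_lim F x (dens Phi x / Z).
Proof.
  pose proof Z_pos as Zp.
  assert (h : x - 1 <= x + 1) by lra.
  assert (C0 : forall y, x - 1 <= y <= x + 1 -> continuity_pt (dens Phi) y)
    by (intros; apply dens_continuous).
  set (P := primitive h (FTC_P1 h C0)).
  assert (HP : derivable_pt_lim P x (dens Phi x)) by (apply RiemannInt_P27; lra).
  apply derivable_pt_lim_local with
    (g := plus_fct (fct_cte (F (x - 1))) (mult_real_fct (/ Z) P)) (r := 1); [lra| |].
  - intros u Hu. apply Rabs_def2 in Hu.
    unfold plus_fct, fct_cte, mult_real_fct, P, primitive.
    destruct (Rle_dec (x - 1) u) as [r1|r1]; [|lra].
    destruct (Rle_dec u (x + 1)) as [r2|r2]; [|lra].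
    rewrite (RiemannInt_P5 _ (dens_integrable (x - 1) u)), <- F_increment. field. lra.
  - replace (dens Phi x / Z) with (0 + / Z * dens Phi x) by (field; lra).
    apply derivable_pt_lim_plus; [apply derivable_pt_lim_const|].
    apply derivable_pt_lim_scal; auto.
Qed.

Lemma F_strict (x y : R) : x < y -> F x < F y.
Proof.
  intros Hxy. pose proof Z_pos as Zp.
  apply (pos_deriv_increasing F (fun u => dens Phi u / Z)); auto.
  - intros; apply F_derivative.
  - intros; apply Rdiv_lt_0_compat; auto; apply dens_pos.
Qed.

Lemma F_mono (x y : R) : x <= y -> F x <= F y.
Proof. intros [H|H]; [left; apply F_strict; auto|subst; lra]. Qed.

Lemma F_left_tail (eps : R) : 0 < eps ->
  exists M, forall x, x <= - M -> Rabs (Z * F x) < eps.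
Proof.
  intros Heps. destruct (HZ (eps/3) ltac:(lra)) as [M HM].
  exists M. intros x Hx.
  destruct (HF x (eps/3) ltac:(lra)) as [Mx [HMx Px]].
  set (b := Rabs M + 1).
  assert (Hb : M <= b) by (unfold b; pose proof (Rle_abs M); lra).
  specialize (Px Mx (dens_integrable Mx x) ltac:(lra)).
  pose proof (HM Mx b (dens_integrable Mx b) ltac:(lra) Hb) as K1.
  pose proof (HM x b (dens_integrable x b) Hx Hb) as K2.
  pose proof (RiemannInt_P26 (dens_integrable Mx x) (dens_integrable x b)
    (dens_integrable Mx b)) as E.
  apply Rabs_def2 in Px. apply Rabs_def2 in K1. apply Rabs_def2 in K2. apply Rabs_def1; lra.
Qed.

Lemma F_right_tail (eps : R) : 0 < eps ->
  exists M, forall x, M <= x -> Rabs (Z - Z * F x) < eps.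
Proof.
  intros Heps. destruct (HZ (eps/2) ltac:(lra)) as [M HM].
  exists M. intros x Hx.
  destruct (HF x (eps/2) ltac:(lra)) as [Mx [HMx Px]].
  set (a := Rmin Mx (- M)). pose proof (Rmin_l Mx (-M)). pose proof (Rmin_r Mx (-M)).
  specialize (Px a (dens_integrable a x) ltac:(unfold a; lra)).
  pose proof (HM a x (dens_integrable a x) ltac:(unfold a; lra) Hx) as K1.
  apply Rabs_def2 in Px. apply Rabs_def2 in K1. apply Rabs_def1; lra.
Qed.

Lemma F_bounds (x : R) : 0 < F x < 1.
Proof.
  pose proof Z_pos as Zp.
  assert (G0 : forall u, 0 <= F u).
  { intros u. destruct (Rle_lt_dec 0 (F u)) as [|Hl]; auto. exfalso.
    destruct (F_left_tail (- (Z * F u))) as [M HM]; [nra|].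
    set (w := Rmin (u - 1) (- M)). pose proof (Rmin_l (u-1) (-M)); pose proof (Rmin_r (u-1) (-M)).
    specialize (HM w ltac:(unfold w; lra)). pose proof (F_strict w u ltac:(unfold w; lra)).
    apply Rabs_def2 in HM. nra. }
  assert (G1 : forall u, F u <= 1).
  { intros u. destruct (Rle_lt_dec (F u) 1) as [|Hl]; auto. exfalso.
    destruct (F_right_tail (Z * F u - Z)) as [M HM]; [nra|].
    set (w := Rmax (u + 1) M). pose proof (Rmax_l (u+1) M); pose proof (Rmax_r (u+1) M).
    specialize (HM w ltac:(unfold w; lra)). pose proof (F_strict u w ltac:(unfold w; lra)).
    apply Rabs_def2 in HM. nra. }
  pose proof (F_strict (x - 1) x ltac:(lra)). pose proof (G0 (x - 1)).
  pose proof (F_strict x (x + 1) ltac:(lra)). pose proof (G1 (x + 1)). lra.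
Qed.

Lemma left_tail_derivative (x : R) : 0 < x ->
  derivable_pt_lim (fun u => Z * F (- u)) x (- exp (- Phi x)).
Proof.
  intros Hx. pose proof Z_pos as Zp.
  assert (D : derivable_pt_lim (fun u => F (- u)) x (dens Phi (- x) / Z * (-1))).
  { apply (derivable_pt_lim_comp (fun u => - u) F); [|apply F_derivative].
    eapply derivable_pt_lim_ext; [| |apply (derivable_pt_lim_opp id)];
      [intros; reflexivity|reflexivity|apply derivable_pt_lim_id]. }
  eapply derivable_pt_lim_ext; [| |apply (derivable_pt_lim_scal _ Z _ _ D)].
  - intros; reflexivity.
  - unfold dens. rewrite Rabs_Ropp, Rabs_right by lra. field. lra.
Qed.

Lemma right_tail_derivative (x : R) : 0 < x ->
  derivable_pt_lim (fun u => Z - Z * F u) x (- exp (- Phi x)).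
Proof.
  intros Hx. pose proof Z_pos as Zp.
  assert (D := derivable_pt_lim_minus (fct_cte Z) (mult_real_fct Z F) x _ _
      (derivable_pt_lim_const Z x) (derivable_pt_lim_scal F Z x _ (F_derivative x))).
  eapply derivable_pt_lim_ext; [| |exact D].
  - intros; reflexivity.
  - unfold dens. rewrite Rabs_right by lra. field. lra.
Qed.

Variables G J : R -> R.
Hypothesis HG : forall t, 0 < t < 1 -> F (G t) = t.
Hypothesis HJ0 : J 0 = 0.
Hypothesis HJ1 : J 1 = 0.
Hypothesis HJ : forall t, 0 < t < 1 -> derivable_pt_lim F (G t) (J t).

Lemma J_formula (t : R) : 0 < t < 1 -> J t = dens Phi (G t) / Z.
Proof. intros Ht. apply (uniqueness_limite F (G t)); auto. apply F_derivative. Qed.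

Lemma J_bounded_middle (del : R) : 0 < del <= 1/2 ->
  exists a b, 0 < a /\ 0 < b /\ forall t, del <= t <= 1 - del -> a <= J t <= b.
Proof.
  intros Hdel. pose proof Z_pos as Zp.
  set (Xq := Rmax (Rabs (G del)) (Rabs (G (1 - del)))).
  exists (exp (- Phi Xq) / Z), (exp (- Phi 0) / Z).
  split; [apply Rdiv_lt_0_compat; [apply exp_pos|lra]|].
  split; [apply Rdiv_lt_0_compat; [apply exp_pos|lra]|].
  intros t Ht. rewrite J_formula by lra. unfold dens.
  assert (Hlo : G del <= G t).
  { destruct (Rle_lt_dec (G del) (G t)) as [|Hlt]; auto.
    pose proof (F_strict _ _ Hlt). rewrite !HG in H by lra. lra. }
  assert (Hhi : G t <= G (1 - del)).
  { destruct (Rle_lt_dec (G t) (G (1 - del))) as [|Hlt]; auto.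
    pose proof (F_strict _ _ Hlt). rewrite !HG in H by lra. lra. }
  assert (HXq : Rabs (G t) <= Xq).
  { unfold Xq. pose proof (Rmax_l (Rabs (G del)) (Rabs (G (1 - del)))).
    pose proof (Rmax_r (Rabs (G del)) (Rabs (G (1 - del)))).
    pose proof (Rle_abs (G (1 - del))). pose proof (Rle_abs (- G del)).
    rewrite Rabs_Ropp in *. apply Rabs_le. lra. }
  unfold Rdiv. split; apply Rmult_le_compat_r; try (left; apply Rinv_0_lt_compat; lra);
    apply exp_le, Ropp_le_contravar, Hmono; auto using Rabs_pos; lra.
Qed.

Lemma rderiv_level_bounds (lo hi : R) : Phi 0 < lo ->
  exists lmin lmax, 0 < lmin /\ 0 <= lmax /\ forall y l, 0 <= y -> lo <= Phi y <= hi ->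
    rderiv Phi y l -> lmin <= l <= lmax.
Proof.
  intros Hlo.
  destruct (Hcont0 (lo - Phi 0) ltac:(lra)) as [d0 [Hd0 Hd0b]].
  set (c := d0 / 2).
  assert (Hc : Phi c < lo) by (specialize (Hd0b c ltac:(unfold c in *; lra)); apply Rabs_def2 in Hd0b; lra).
  destruct (Phi_eventually_large hi) as [Y [HY0 HYb]].
  exists (slope Phi Y (Y + 1)), (slope Phi (c / 2) c). split; [|split].
  - unfold slope. apply Rdiv_lt_0_compat; [|lra].
    pose proof (Phi_strict Y (Y + 1) HY0 ltac:(lra)). lra.
  - apply Phi_slope_nonneg; unfold c in *; lra.
  - intros y l Hy [Hy1 Hy2] Hl.
    assert (Hcy : c < y).
    { destruct (Rlt_le_dec c y) as [|r]; auto. pose proof (Hmono y c Hy r). lra. }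
    assert (HyY : y < Y).
    { destruct (Rlt_le_dec y Y) as [|r]; auto. specialize (HYb y r). lra. }
    split.
    + apply Rle_trans with (slope Phi y (Y + 1)); [apply Phi_slope_mono; lra|].
      apply Phi_rderiv_ge_slope; auto; lra.
    + apply Rle_trans with (slope Phi c y); [apply Phi_rderiv_le_slope; auto; unfold c in *; lra|].
      apply Phi_slope_mono; unfold c in *; lra.
Qed.

Lemma dPhi_inv_exists (c v : R) : 0 < c -> Phi c <= v -> exists l, dPhi_inv Phi v l.
Proof.
  intros Hc Hv. destruct (Phi_level_attained c v Hc Hv) as [y [l [Hy [Hyv Hl]]]].
  exists l, y. repeat split; auto; lra.
Qed.

Lemma dPhi_inv_exists_small : exists d, 0 < d /\
  forall t, 0 < t < d -> exists l, dPhi_inv Phi (ln (/ t)) l.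
Proof.
  exists (exp (- Phi 1)). split; [apply exp_pos|]. intros t Ht.
  apply (dPhi_inv_exists 1); [lra|].
  rewrite ln_Rinv by lra.
  assert (ln t < - Phi 1) by (rewrite <- (ln_exp (- Phi 1)); apply ln_increasing; lra).
  lra.
Qed.

Lemma LPhi_defined : Phi 0 < ln 2 -> forall t, 0 <= t <= 1 -> exists L, LPhi Phi t L.
Proof.
  intros Hln2 t Ht.
  destruct (Req_dec t 0) as [E0|E0]; [exists 0; left; split; auto|].
  destruct (Req_dec t 1) as [E1|E1]; [exists 0; left; split; auto|].
  destruct (Hcont0 (ln 2 - Phi 0) ltac:(lra)) as [d0 [Hd0 Hd0b]].
  assert (Hc : Phi (d0 / 2) < ln 2)
    by (specialize (Hd0b (d0 / 2) ltac:(lra)); apply Rabs_def2 in Hd0b; lra).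
  destruct (Rmin_compl_bounds t ltac:(lra)) as [Hm Hml].
  destruct (dPhi_inv_exists (d0 / 2) (ln (/ Rmin t (1 - t)))) as [l Hl]; [lra|lra|].
  exists (Rmin t (1 - t) * l). right. split; [lra|]. exists l; auto.
Qed.

Section RegularTail.

Variables (A th : R) (Phi1 Phi2 : R -> R).
Hypothesis HA0 : 0 <= A.
Hypothesis Hth : 1 < th.
Hypothesis HApos : forall x, A < x -> 0 < Phi x.
Hypothesis HPhi1 : forall x, A < x -> derivable_pt_lim Phi x (Phi1 x).
Hypothesis HPhi2 : forall x, A < x -> derivable_pt_lim Phi1 x (Phi2 x).
Hypothesis Hconv : forall x y lam, A < x -> A < y -> 0 <= lam <= 1 ->
  Rpower (Phi (lam * x + (1 - lam) * y)) th <=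
  lam * Rpower (Phi x) th + (1 - lam) * Rpower (Phi y) th.

Lemma Phi1_pos (x : R) : A < x -> 0 < Phi1 x.
Proof. intros Hx. apply (Phi_rderiv_pos x); [lra|apply deriv_rderiv; auto]. Qed.

Lemma Phi1_noninc (x y : R) : A < x -> x < y -> Phi1 y <= Phi1 x.
Proof.
  intros Hx Hxy. apply (concave_rderiv_noninc Phi (fun u => 0 <= u) Hconc) with x y;
    try (apply deriv_rderiv, HPhi1); intros; lra.
Qed.

Lemma Phi2_nonpos (x : R) : A < x -> Phi2 x <= 0.
Proof.
  intros Hx. apply (deriv_nonpos_of_noninc Phi1 x); auto.
  intros h Hh. apply Phi1_noninc; lra.
Qed.

Definition dPhi_pow (x : R) : R := th * Rpower (Phi x) (th - 1) * Phi1 x.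

Lemma Rpower_comp_derivative (f : R -> R) (f' x k : R) : 0 < f x ->
  derivable_pt_lim f x f' ->
  derivable_pt_lim (fun u => Rpower (f u) k) x (k * Rpower (f x) (k - 1) * f').
Proof.
  intros Hp Hd. apply (derivable_pt_lim_comp f (fun u => Rpower u k)); auto.
  apply derivable_pt_lim_power; auto.
Qed.

Lemma dPhi_pow_nondec (x y : R) : A < x -> x < y -> dPhi_pow x <= dPhi_pow y.
Proof.
  intros Hx Hxy.
  assert (Hg : concave_on (fun u => - Rpower (Phi u) th) (fun u => A < u)).
  { intros a b lam Ha Hb Hl. pose proof (Hconv a b lam Ha Hb Hl). lra. }
  assert (Dg : forall u, A < u ->
    rderiv (fun u => - Rpower (Phi u) th) u (- dPhi_pow u)).
  { intros u Hu. apply deriv_rderiv.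
    apply (derivable_pt_lim_opp (fun u => Rpower (Phi u) th)).
    apply Rpower_comp_derivative; auto. }
  apply Ropp_le_cancel.
  apply (concave_rderiv_noninc _ (fun u => A < u) Hg) with (x := x) (y := y);
    auto; try (intros; lra). apply Dg; lra.
Qed.

Lemma Phi2_lower_bound (x : R) : A < x ->
  0 <= (th - 1) * (Phi1 x * Phi1 x) + Phi x * Phi2 x.
Proof.
  intros Hx.
  set (r := Rpower (Phi x) (th - 2)).
  assert (Hr : 0 < r) by (unfold r, Rpower; apply exp_pos).
  assert (E1 : Rpower (Phi x) (th - 1) = r * Phi x).
  { unfold r. replace (th - 1) with ((th - 2) + 1) by ring.
    rewrite Rpower_plus, Rpower_1; auto. }
  assert (D : derivable_pt_lim dPhi_pow x
     (th * ((th - 1) * Rpower (Phi x) (th - 1 - 1) * Phi1 x) * Phi1 x +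
      th * Rpower (Phi x) (th - 1) * Phi2 x)).
  { apply (derivable_pt_lim_mult (fun u => th * Rpower (Phi u) (th - 1)) Phi1); auto.
    apply (derivable_pt_lim_scal (fun u => Rpower (Phi u) (th - 1))).
    apply Rpower_comp_derivative; auto. }
  replace (th - 1 - 1) with (th - 2) in D by ring. fold r in D. rewrite E1 in D.
  apply (deriv_nonneg_of_nondec dPhi_pow x) in D;
    [|intros h Hh; apply dPhi_pow_nondec; lra].
  assert (0 < th * r) by (apply Rmult_lt_0_compat; lra).
  nra.
Qed.

Lemma dPhi_pow_lower : exists c0, 0 < c0 /\
  forall x, A + 1 <= x -> c0 <= Rpower (Phi x) (th - 1) * Phi1 x.
Proof.
  exists (Rpower (Phi (A+1)) (th - 1) * Phi1 (A+1)). split.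
  - apply Rmult_lt_0_compat; [unfold Rpower; apply exp_pos|apply Phi1_pos; lra].
  - intros x [Hx|Hx]; [|subst; lra].
    pose proof (dPhi_pow_nondec (A+1) x ltac:(lra) Hx) as H.
    unfold dPhi_pow in H. rewrite !Rmult_assoc in H.
    apply Rmult_le_reg_l with th; lra.
Qed.

Hypothesis Hsub : forall eps, 0 < eps -> exists M, forall x, M < x -> Rabs (Phi x / x) < eps.

Lemma Phi1_vanishes (eps : R) : 0 < eps -> exists X, forall x, X < x -> Phi1 x < eps.
Proof.
  intros Heps. destruct (Hsub (eps/4) ltac:(lra)) as [M HM].
  set (N := 4 * Rabs (Phi 0) / eps).
  assert (HN : 0 <= N)
    by (apply Rmult_le_pos; [pose proof (Rabs_pos (Phi 0)); lra|left; apply Rinv_0_lt_compat; lra]).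
  exists (Rmax (Rmax M (2 * A + 1)) (N + 1)). intros x Hx.
  pose proof (Rmax_l (Rmax M (2 * A + 1)) (N + 1)). pose proof (Rmax_r (Rmax M (2 * A + 1)) (N + 1)).
  pose proof (Rmax_l M (2*A+1)). pose proof (Rmax_r M (2*A+1)).
  assert (S : Phi1 x <= slope Phi (x/2) x)
    by (apply Phi_rderiv_le_slope; [lra|lra|apply deriv_rderiv, HPhi1; lra]).
  assert (E : slope Phi (x/2) x = 2 * (Phi x / x) - 2 * Phi (x/2) / x) by (unfold slope; field; lra).
  pose proof (Hmono 0 (x/2) ltac:(lra) ltac:(lra)).
  specialize (HM x ltac:(lra)). apply Rabs_def2 in HM.
  assert (2 * Phi 0 / x <= 2 * Phi (x/2) / x).
  { unfold Rdiv. apply Rmult_le_compat_r; [left; apply Rinv_0_lt_compat; lra|lra]. }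
  assert (Hp0 : - (2 * Phi 0 / x) < eps / 2).
  { assert (4 * Rabs (Phi 0) < eps * x).
    { apply Rmult_lt_reg_r with (/ eps); [apply Rinv_0_lt_compat; lra|].
      replace (eps * x * / eps) with x by (field; lra). unfold N in *. lra. }
    pose proof (Rle_abs (- Phi 0)) as HH. rewrite Rabs_Ropp in HH.
    apply Rmult_lt_reg_r with x; [lra|].
    replace (- (2 * Phi 0 / x) * x) with (- 2 * Phi 0) by (field; lra). lra. }
  lra.
Qed.

Definition tail_profile (u : R) : R := exp (- Phi u) / Phi1 u.

Lemma tail_profile_pos (x : R) : A < x -> 0 < tail_profile x.
Proof. intros Hx. apply Rdiv_lt_0_compat; [apply exp_pos|apply Phi1_pos; auto]. Qed.

Lemma tail_profile_derivative (x : R) : A < x ->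
  derivable_pt_lim tail_profile x
     (- exp (- Phi x) - Phi2 x * (exp (- Phi x) / (Phi1 x * Phi1 x))).
Proof.
  intros Hx. pose proof (Phi1_pos x Hx) as Hp.
  assert (De : derivable_pt_lim (fun u => exp (- Phi u)) x (exp (- Phi x) * (- Phi1 x))).
  { apply (derivable_pt_lim_comp (fun u => - Phi u) exp).
    - apply (derivable_pt_lim_opp Phi); auto.
    - apply derivable_pt_lim_exp. }
  pose proof (derivable_pt_lim_div _ _ _ _ _ De (HPhi2 x Hx) ltac:(lra)) as Dq.
  eapply derivable_pt_lim_ext; [| |exact Dq].
  - intros u; unfold tail_profile, div_fct; reflexivity.
  - unfold Rsqr. field. lra.
Qed.

(* h -> 0 at +oo, since exp(-Phi) decays faster than Phi^(th-1). *)
Lemma tail_profile_vanishes (eps : R) : 0 < eps ->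
  exists Y, forall y, Y <= y -> tail_profile y < eps.
Proof.
  intros Heps.
  destruct dPhi_pow_lower as [c0 [Hc0 Hc0b]].
  destruct (ln_eventually_small (/ (2 * th))) as [B [HB0 HBl]]; [apply Rinv_0_lt_compat; lra|].
  destruct (Phi_eventually_large (Rmax B (2 * Rabs (ln (c0 * eps))))) as [Y0 [HY0 HY0b]].
  exists (Rmax Y0 (A + 1)). intros y Hy.
  pose proof (Rmax_l Y0 (A+1)). pose proof (Rmax_r Y0 (A+1)).
  specialize (HY0b y ltac:(lra)).
  pose proof (Rmax_l B (2 * Rabs (ln (c0 * eps)))). pose proof (Rmax_r B (2 * Rabs (ln (c0 * eps)))).
  set (u := Phi y) in *.
  assert (Hu : 0 < u) by (unfold u; apply HApos; lra).
  specialize (HBl u ltac:(lra)). specialize (Hc0b y ltac:(lra)).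
  pose proof (Phi1_pos y ltac:(lra)) as Hp.
  unfold Rpower in Hc0b. fold u in Hc0b.
  assert (L1 : (th - 1) * ln u <= u / 2).
  { assert (W : (th - 1) * ln u <= (th - 1) * (/ (2 * th) * u)) by (apply Rmult_le_compat_l; lra).
    assert (E1 : th * (/ (2 * th) * u) = u / 2) by (field; lra).
    assert (0 <= / (2 * th) * u) by (apply Rmult_le_pos; [left; apply Rinv_0_lt_compat|]; lra).
    nra. }
  set (P := exp ((th - 1) * ln u)) in *.
  assert (HP : 0 < P) by apply exp_pos.
  assert (Hh : tail_profile y <= exp (- u) * P / c0).
  { unfold tail_profile. fold u. apply div_le_div; auto.
    rewrite Rmult_assoc. apply Rmult_le_compat_l; [left; apply exp_pos|]. lra. }
  assert (E2 : exp (- u) * P = exp (- u + (th - 1) * ln u)) by (unfold P; rewrite exp_plus; auto).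
  assert (Hl : exp (- u + (th - 1) * ln u) <= exp (- u / 2)) by (apply exp_le; lra).
  assert (Hl2 : exp (- u / 2) < c0 * eps).
  { rewrite <- (exp_ln (c0 * eps)) by (apply Rmult_lt_0_compat; lra).
    apply exp_increasing. pose proof (Rle_abs (- ln (c0 * eps))) as HH. rewrite Rabs_Ropp in HH. lra. }
  assert (exp (- u) * P / c0 < eps).
  { apply Rmult_lt_reg_r with c0; auto. unfold Rdiv. rewrite Rmult_assoc, Rinv_l by lra. lra. }
  lra.
Qed.

(* log Phi' is negligible against Phi: Phi^(th-1) Phi' >= c0 and log Phi = o(Phi). *)
Lemma log_Phi1_negligible (eta K : R) : 0 < eta ->
  exists X, forall x, X < x -> (1 - eta) * Phi x <= K + ln (Phi1 x) + Phi x.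
Proof.
  intros Heta.
  destruct dPhi_pow_lower as [c0 [Hc0 Hc0b]].
  destruct (ln_eventually_small (eta / (2 * th))) as [B [HB0 HBl]];
    [apply Rdiv_lt_0_compat; lra|].
  destruct (Phi_eventually_large (Rmax B (2 * Rabs (K + ln c0) / eta))) as [Y [HY0 HYb]].
  exists (Rmax (A + 1) Y). intros x Hx. apply Rmax_Rlt in Hx as [HxA HxY].
  specialize (HYb x ltac:(lra)). apply Rmax_Rlt in HYb as [HxB HxK].
  pose proof (HApos x ltac:(lra)) as Hpx. pose proof (Phi1_pos x ltac:(lra)) as Hp.
  assert (HlnR : ln c0 <= (th - 1) * ln (Phi x) + ln (Phi1 x)).
  { assert (0 < Rpower (Phi x) (th - 1)) by (unfold Rpower; apply exp_pos).
    rewrite <- ln_Rpower, <- ln_mult by auto. apply ln_le; auto. apply Hc0b; lra. }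
  assert (LnS : (th - 1) * ln (Phi x) <= eta * Phi x / 2).
  { specialize (HBl (Phi x) ltac:(lra)).
    assert ((th - 1) * ln (Phi x) <= (th - 1) * (eta / (2 * th) * Phi x))
      by (apply Rmult_le_compat_l; lra).
    assert (th * (eta / (2 * th) * Phi x) = eta * Phi x / 2) by (field; lra).
    assert (0 <= eta / (2 * th) * Phi x)
      by (apply Rmult_le_pos; [left; apply Rdiv_lt_0_compat|]; lra).
    nra. }
  assert (KS : Rabs (K + ln c0) <= eta * Phi x / 2).
  { apply Rmult_lt_compat_l with (r := eta) in HxK; [|lra].
    replace (eta * (2 * Rabs (K + ln c0) / eta)) with (2 * Rabs (K + ln c0)) in HxK
      by (field; lra).
    lra. }
  pose proof (Rle_abs (- (K + ln c0))) as HH. rewrite Rabs_Ropp in HH. nra.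
Qed.

(* Phi^(th-1) Phi' non-decreasing: if Phi(y) is close to Phi(x) (y < x), then
   Phi'(y) is close to Phi'(x). *)
Lemma Phi1_compare (eta x y : R) : 0 < eta <= 1/2 -> A < y -> y < x ->
  (1 - eta) * Phi x <= Phi y -> Phi1 y * (1 - 2 * (th - 1) * eta) <= Phi1 x.
Proof.
  intros Heta Hy Hyx Hlev.
  pose proof (HApos y Hy) as Hpy. pose proof (HApos x ltac:(lra)) as Hpx.
  pose proof (Phi1_pos y Hy) as Hp1.
  pose proof (dPhi_pow_nondec y x Hy Hyx) as PS. unfold dPhi_pow, Rpower in PS.
  set (z := (th - 1) * (ln (Phi y) - ln (Phi x))).
  assert (Ez : exp ((th - 1) * ln (Phi y)) = exp z * exp ((th - 1) * ln (Phi x)))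
    by (unfold z; rewrite <- exp_plus; f_equal; ring).
  rewrite Ez in PS.
  assert (Hth' : 0 < th * exp ((th - 1) * ln (Phi x)))
    by (apply Rmult_lt_0_compat; [lra|apply exp_pos]).
  assert (PS2 : exp z * Phi1 y <= Phi1 x).
  { apply Rmult_le_reg_l with (th * exp ((th - 1) * ln (Phi x))); auto.
    replace (th * exp ((th - 1) * ln (Phi x)) * (exp z * Phi1 y))
      with (th * (exp z * exp ((th - 1) * ln (Phi x))) * Phi1 y) by ring.
    lra. }
  assert (L1 : ln ((1 - eta) * Phi x) <= ln (Phi y)) by (apply ln_le; nra).
  rewrite ln_mult in L1 by lra.
  pose proof (ln_ge_1_sub_inv (1 - eta) ltac:(lra)) as L2.
  assert (L3 : / (1 - eta) <= 1 + 2 * eta).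
  { apply Rmult_le_reg_r with (1 - eta); [lra|]. rewrite Rinv_l by lra. nra. }
  assert (Hz : - (2 * (th - 1) * eta) <= z) by (unfold z; nra).
  pose proof (exp_ineq1_le z). nra.
Qed.

Lemma tail_level_bounds (x t y del : R) : A < x -> 0 < del < 1 ->
  (1 - del) * t <= tail_profile x -> tail_profile x <= t -> Phi y = ln (Z / t) ->
  Phi y <= Phi x + ln (Z * Phi1 x) /\
  ln Z + ln (1 - del) + ln (Phi1 x) + Phi x <= Phi y.
Proof.
  intros Hx Hdel Hlo Hhi HyE. unfold tail_profile in *.
  pose proof Z_pos as Zp. pose proof (Phi1_pos x Hx) as Hp.
  assert (Ht : 0 < t) by (pose proof (tail_profile_pos x Hx); unfold tail_profile in *; lra).
  assert (Ee : exp (- Phi x) = / exp (Phi x)) by (rewrite exp_Ropp; auto).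
  assert (Hex : 0 < exp (Phi x)) by apply exp_pos.
  rewrite HyE. split.
  - rewrite <- (ln_exp (Phi x)) at 1. rewrite <- ln_mult by (try apply exp_pos; nra).
    apply ln_le; [apply Rdiv_lt_0_compat; lra|].
    apply (Rmult_le_compat_r (exp (Phi x) * Phi1 x)) in Hhi; [|nra].
    replace (exp (- Phi x) / Phi1 x * (exp (Phi x) * Phi1 x)) with 1 in Hhi
      by (rewrite Ee; field; lra).
    apply Rmult_le_reg_r with t; auto. replace (Z / t * t) with Z by (field; lra). nra.
  - rewrite <- (ln_exp (Phi x)) at 1.
    rewrite <- !ln_mult by (try apply exp_pos; repeat apply Rmult_lt_0_compat; lra).
    apply ln_le; [repeat apply Rmult_lt_0_compat; try lra; apply exp_pos|].
    apply (Rmult_le_compat_r (exp (Phi x) * Phi1 x)) in Hlo; [|nra].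
    replace (exp (- Phi x) / Phi1 x * (exp (Phi x) * Phi1 x)) with 1 in Hlo
      by (rewrite Ee; field; lra).
    apply Rmult_le_reg_r with t; auto. replace (Z / t * t) with Z by (field; lra). nra.
Qed.

Lemma tail_ratio_bounds (x t y l del eta : R) :
  0 < del < 1 -> 0 < eta <= 1/2 -> A + 1 < x -> 2 * Phi (A + 1) + 2 < Phi x ->
  Z * Phi1 x < 1 -> (1 - eta) * Phi x <= ln Z + ln (1 - del) + ln (Phi1 x) + Phi x ->
  (1 - del) * t <= tail_profile x -> tail_profile x <= t ->
  0 <= y -> Phi y = ln (Z / t) -> rderiv Phi y l ->
  (1 - del) * (1 - 2 * (th - 1) * eta) <= exp (- Phi x) / (t * l) <= 1.
Proof.
  intros Hdel Heta HxA Hbig HZp Hlog Hlo Hhi Hy0 HyE Hl.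
  pose proof Z_pos as Zp. pose proof (Phi1_pos x ltac:(lra)) as Hp.
  assert (Ht : 0 < t) by (pose proof (tail_profile_pos x ltac:(lra)); lra).
  destruct (tail_level_bounds x t y del ltac:(lra) Hdel Hlo Hhi HyE) as [Hup Hdown].
  assert (Hyx : Phi y < Phi x).
  { assert (ln (Z * Phi1 x) < 0) by (rewrite <- ln_1; apply ln_increasing; nra). lra. }
  assert (Hyb : (1 - eta) * Phi x <= Phi y) by lra.
  assert (Hyltx : y < x).
  { destruct (Rlt_le_dec y x) as [|r]; auto. pose proof (Hmono x y ltac:(lra) r). lra. }
  assert (HyA : A + 1 < y).
  { pose proof (HApos x ltac:(lra)).
    destruct (Rlt_le_dec (A + 1) y) as [|r]; auto. pose proof (Hmono y (A + 1) Hy0 r). nra. }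
  assert (El : l = Phi1 y)
    by (apply (rderiv_unique Phi y); auto; apply deriv_rderiv, HPhi1; lra).
  subst l. unfold tail_profile in Hlo, Hhi.
  apply (ratio_squeeze _ _ (Phi1 x)); try lra.
  - split; [lra|]. apply Phi1_noninc; lra.
  - apply (Phi1_compare eta x y); lra.
Qed.

Lemma accuracy_parameters (eps : R) : 0 < eps -> exists del eta,
  0 < del < 1 /\ 0 < eta <= 1/2 /\ 1 - eps < (1 - del) * (1 - 2 * (th - 1) * eta).
Proof.
  intros Heps. set (e := Rmin eps 1).
  assert (He : 0 < e <= 1 /\ e <= eps)
    by (unfold e; pose proof (Rmin_l eps 1); pose proof (Rmin_r eps 1);
        pose proof (Rmin_pos eps 1 Heps ltac:(lra)); lra).
  set (eta := Rmin (1/2) (e / (8 * th))).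
  assert (Heta : 0 < eta <= 1/2 /\ eta <= e / (8 * th)).
  { assert (0 < e / (8 * th)) by (apply Rdiv_lt_0_compat; lra).
    unfold eta. pose proof (Rmin_l (1/2) (e/(8*th))). pose proof (Rmin_r (1/2) (e/(8*th))).
    pose proof (Rmin_pos (1/2) (e/(8*th)) ltac:(lra) ltac:(lra)). lra. }
  assert (Ha : 0 <= 2 * (th - 1) * eta < e / 4).
  { assert (th * (e / (8 * th)) = e / 8) by (field; lra). split; nra. }
  exists (e / 2), eta. split; [lra|]. split; [lra|].
  assert (0 <= e * (2 * (th - 1) * eta)) by nra. nra.
Qed.

Section TailMass.

Variables (T : R -> R) (X0 : R).
Hypothesis HT : forall x, X0 < x -> derivable_pt_lim T x (- exp (- Phi x)).
Hypothesis HT0 : forall eps, 0 < eps -> exists M, forall x, M <= x -> Rabs (T x) < eps.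

Lemma tail_and_profile_small (eps : R) : 0 < eps ->
  exists M, forall y, M <= y -> Rabs (T y) < eps /\ tail_profile y < eps.
Proof.
  intros Heps.
  destruct (HT0 eps Heps) as [M1 HM1].
  destruct (tail_profile_vanishes eps Heps) as [M2 HM2].
  exists (Rmax M1 M2). intros y Hy.
  pose proof (Rmax_l M1 M2). pose proof (Rmax_r M1 M2).
  split; [apply HM1|apply HM2]; lra.
Qed.

(* T - h has derivative  Phi'' exp(-Phi)/Phi'^2 <= 0  and tends to 0, so h <= T. *)
Lemma tail_profile_le_tail (x : R) : Rmax (A + 1) X0 < x -> tail_profile x <= T x.
Proof.
  intros Hx. apply Rmax_Rlt in Hx as [HxA HxX].
  cut (0 <= T x - tail_profile x); [lra|].
  apply (noninc_limit_nonneg (fun u => T u - tail_profile u) (Rmax (A + 1) X0)).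
  - intros a b Ha Hab. apply Rmax_Rlt in Ha as [HaA HaX].
    apply (nonpos_deriv_noninc (fun u => T u - tail_profile u)
      (fun c => Phi2 c * (exp (- Phi c) / (Phi1 c * Phi1 c)))); auto.
    + intros c Hc.
      eapply derivable_pt_lim_ext; [intros; reflexivity| |].
      2: { apply (derivable_pt_lim_minus T tail_profile); [apply HT|apply tail_profile_derivative];
           lra. }
      ring.
    + intros c Hc.
      pose proof (Phi1_pos c ltac:(lra)). pose proof (Phi2_nonpos c ltac:(lra)).
      assert (0 < exp (- Phi c) / (Phi1 c * Phi1 c))
        by (apply Rdiv_lt_0_compat; [apply exp_pos|nra]).
      nra.
  - intros eps Heps. destruct (tail_and_profile_small (eps/2) ltac:(lra)) as [M HM].
    exists M. intros y Hy. destruct (HM y Hy) as [H1 H2]. apply Rabs_def2 in H1. lra.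
  - apply Rmax_Rlt; lra.
Qed.

(* h - (1-del) T has derivative  -(exp(-Phi)/Phi'^2) (del Phi'^2 + Phi''), which
   is <= 0 as soon as Phi >= (th-1)/del, by Phi'' >= -(th-1) Phi'^2/Phi;
   since it tends to 0, (1-del) T <= h eventually. *)
Lemma tail_le_tail_profile (del : R) : 0 < del < 1 ->
  exists X, forall x, X < x -> (1 - del) * T x <= tail_profile x.
Proof.
  intros Hdel.
  destruct (Phi_eventually_large ((th - 1) / del)) as [Y0 [HY0 HY0b]].
  set (X := Rmax (Rmax (A + 1) X0) Y0). exists X. intros x Hx.
  cut (0 <= tail_profile x - (1 - del) * T x); [lra|].
  apply (noninc_limit_nonneg (fun u => tail_profile u - (1 - del) * T u) X); auto.
  - intros a b Ha Hab. unfold X in Ha.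
    apply Rmax_Rlt in Ha as [Ha HaY]. apply Rmax_Rlt in Ha as [HaA HaX].
    apply (nonpos_deriv_noninc (fun u => tail_profile u - (1 - del) * T u)
      (fun c => - (exp (- Phi c) / (Phi1 c * Phi1 c)) *
                (del * (Phi1 c * Phi1 c) + Phi2 c))); auto.
    + intros c Hc. pose proof (Phi1_pos c ltac:(lra)).
      eapply derivable_pt_lim_ext; [intros; reflexivity| |].
      2: { apply (derivable_pt_lim_minus tail_profile (mult_real_fct (1 - del) T));
           [apply tail_profile_derivative|apply derivable_pt_lim_scal, HT]; lra. }
      field. lra.
    + intros c Hc.
      pose proof (Phi1_pos c ltac:(lra)). pose proof (Phi2_lower_bound c ltac:(lra)).
      pose proof (HApos c ltac:(lra)).
      assert (Hbig : th - 1 <= del * Phi c).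
      { assert (Hb : (th - 1) / del < Phi c) by (apply HY0b; lra).
        apply Rmult_lt_compat_l with (r := del) in Hb; [|lra].
        replace (del * ((th - 1) / del)) with (th - 1) in Hb by (field; lra). lra. }
      assert (0 <= del * (Phi1 c * Phi1 c) + Phi2 c).
      { assert (0 <= Phi1 c * Phi1 c) by nra.
        destruct (Rle_lt_dec 0 (del * (Phi1 c * Phi1 c) + Phi2 c)); auto. nra. }
      assert (0 < exp (- Phi c) / (Phi1 c * Phi1 c))
        by (apply Rdiv_lt_0_compat; [apply exp_pos|nra]).
      nra.
  - intros eps Heps. destruct (tail_and_profile_small (eps/2) ltac:(lra)) as [M HM].
    exists (Rmax M (A + 1)). intros y Hy.
    pose proof (Rmax_l M (A + 1)). pose proof (Rmax_r M (A + 1)).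
    destruct (HM y ltac:(lra)) as [H1 H2]. apply Rabs_def2 in H1.
    pose proof (tail_profile_pos y ltac:(lra)). nra.
Qed.

Lemma tail_level_asymptotics (eps : R) : 0 < eps -> exists X, forall x, X < x -> 0 < T x /\
  forall y l, 0 <= y -> Phi y = ln (Z / T x) -> rderiv Phi y l ->
    Rabs (exp (- Phi x) / (T x * l) - 1) < eps.
Proof.
  intros Heps. pose proof Z_pos as Zp.
  destruct (accuracy_parameters eps Heps) as [del [eta [Hdel [Heta Hprod]]]].
  destruct (tail_le_tail_profile del Hdel) as [X2 HX2].
  destruct (Phi1_vanishes (/ Z) ltac:(apply Rinv_0_lt_compat; lra)) as [X3 HX3].
  destruct (log_Phi1_negligible eta (ln Z + ln (1 - del)) ltac:(lra)) as [X4 HX4].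
  destruct (Phi_eventually_large (2 * Phi (A + 1) + 2)) as [Y5 [HY5 HY5b]].
  exists (Rmax (Rmax (Rmax (A + 1) X0) X2) (Rmax X3 (Rmax X4 Y5))). intros x Hx.
  apply Rmax_Rlt in Hx as [Hx Hx']. apply Rmax_Rlt in Hx as [Hx1 Hx2].
  apply Rmax_Rlt in Hx' as [Hx3 Hx']. apply Rmax_Rlt in Hx' as [Hx4 Hx5].
  pose proof (Rmax_l (A + 1) X0) as HA1.
  pose proof (tail_profile_le_tail x Hx1) as Hhi.
  pose proof (tail_profile_pos x ltac:(lra)) as Hh.
  split; [lra|]. intros y l Hy0 HyE Hl.
  assert (HZp : Z * Phi1 x < 1).
  { specialize (HX3 x Hx3).
    apply Rmult_lt_reg_r with (/ Z); [apply Rinv_0_lt_compat; lra|].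
    replace (Z * Phi1 x * / Z) with (Phi1 x) by (field; lra). lra. }
  destruct (tail_ratio_bounds x (T x) y l del eta Hdel Heta ltac:(lra) (HY5b x ltac:(lra))
    HZp (HX4 x Hx4) (HX2 x Hx2) Hhi Hy0 HyE Hl) as [R1 R2].
  apply Rabs_def1; lra.
Qed.

End TailMass.

Lemma J_ratio_left (eps : R) : 0 < eps -> exists d, 0 < d <= 1/2 /\
  forall t l, 0 < t < d -> dPhi_inv Phi (ln (/ t)) l -> Rabs (J t / (t * l) - 1) < eps.
Proof.
  intros Heps. pose proof Z_pos as Zp.
  assert (HT0 : forall e, 0 < e -> exists M, forall x, M <= x -> Rabs (Z * F (- x)) < e).
  { intros e He. destruct (F_left_tail e He) as [M HM]. exists M. intros x Hx. apply HM. lra. }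
  destruct (tail_level_asymptotics (fun u => Z * F (- u)) 0 left_tail_derivative HT0 eps Heps)
    as [X HX].
  set (Xp := Rmax X 0 + 1). pose proof (Rmax_l X 0). pose proof (Rmax_r X 0).
  pose proof (F_bounds (- Xp)).
  exists (Rmin (F (- Xp)) (1/2)). split; [split; [apply Rmin_pos; lra|apply Rmin_r]|].
  intros t l Ht [y [Hy0 [HyE Hl]]]. pose proof (Rmin_l (F (- Xp)) (1/2)).
  assert (Ht1 : 0 < t < 1) by (pose proof (Rmin_r (F (- Xp)) (1/2)); lra).
  set (x0 := G t). assert (Fx0 : F x0 = t) by (apply HG; auto).
  assert (Hx0 : x0 < - Xp).
  { destruct (Rlt_le_dec x0 (- Xp)) as [|r]; auto. pose proof (F_mono _ _ r). lra. }
  destruct (HX (- x0) ltac:(unfold Xp in *; lra)) as [_ HR].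
  rewrite Ropp_involutive, Fx0 in HR.
  assert (Hl0 : 0 < l) by (apply (Phi_rderiv_pos y); auto).
  specialize (HR y l Hy0 ltac:(rewrite HyE; f_equal; field; lra) Hl).
  rewrite (J_formula t Ht1). fold x0. unfold dens. rewrite (Rabs_left x0) by (unfold Xp in *; lra).
  replace (exp (- Phi (- x0)) / Z / (t * l)) with (exp (- Phi (- x0)) / (Z * t * l))
    by (field; lra).
  auto.
Qed.

Lemma J_ratio_right (eps : R) : 0 < eps -> exists d, 0 < d <= 1/2 /\
  forall t l, 1 - d < t < 1 -> dPhi_inv Phi (ln (/ (1 - t))) l ->
    Rabs (J t / ((1 - t) * l) - 1) < eps.
Proof.
  intros Heps. pose proof Z_pos as Zp.
  destruct (tail_level_asymptotics (fun u => Z - Z * F u) 0 right_tail_derivative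
    F_right_tail eps Heps) as [X HX].
  set (Xp := Rmax X 0 + 1). pose proof (Rmax_l X 0). pose proof (Rmax_r X 0).
  pose proof (F_bounds Xp).
  exists (Rmin (1 - F Xp) (1/2)). split; [split; [apply Rmin_pos; lra|apply Rmin_r]|].
  intros t l Ht [y [Hy0 [HyE Hl]]]. pose proof (Rmin_l (1 - F Xp) (1/2)).
  assert (Ht1 : 0 < t < 1) by (pose proof (Rmin_r (1 - F Xp) (1/2)); lra).
  set (x0 := G t). assert (Fx0 : F x0 = t) by (apply HG; auto).
  assert (Hx0 : Xp < x0).
  { destruct (Rlt_le_dec Xp x0) as [|r]; auto. pose proof (F_mono _ _ r). lra. }
  destruct (HX x0 ltac:(unfold Xp in *; lra)) as [_ HR].
  rewrite Fx0 in HR.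
  assert (Hl0 : 0 < l) by (apply (Phi_rderiv_pos y); auto).
  specialize (HR y l Hy0 ltac:(rewrite HyE; f_equal;
    replace (Z - Z * t) with (Z * (1 - t)) by ring; field; try split; lra) Hl).
  rewrite (J_formula t Ht1). fold x0. unfold dens. rewrite (Rabs_right x0) by (unfold Xp in *; lra).
  replace (exp (- Phi x0) / Z / ((1 - t) * l)) with (exp (- Phi x0) / ((Z - Z * t) * l))
    by (replace (Z - Z * t) with (Z * (1 - t)) by ring; field; repeat split; lra).
  auto.
Qed.

Lemma J_comparable_near_ends : exists d, 0 < d <= 1/2 /\
  forall t l, 0 < t < 1 -> (t < d \/ 1 - d < t) ->
    dPhi_inv Phi (ln (/ Rmin t (1 - t))) l ->
    Rmin t (1 - t) * l / 2 <= J t <= 3 / 2 * (Rmin t (1 - t) * l).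
Proof.
  destruct (J_ratio_left (1/2) ltac:(lra)) as [d1 [Hd1 H1]].
  destruct (J_ratio_right (1/2) ltac:(lra)) as [d2 [Hd2 H2]].
  exists (Rmin d1 d2). pose proof (Rmin_l d1 d2). pose proof (Rmin_r d1 d2).
  split; [split; [apply Rmin_pos|]; lra|].
  intros t l Ht Hend Hl.
  assert (Hl0 : 0 < l) by (destruct Hl as [y [Hy [_ Hy']]]; apply (Phi_rderiv_pos y); auto).
  assert (Hr : forall m, 0 < m -> Rabs (J t / (m * l) - 1) < 1/2 ->
            m * l / 2 <= J t <= 3 / 2 * (m * l)).
  { intros m Hm HR. apply Rabs_def2 in HR.
    assert (Hml : 0 < m * l) by nra.
    replace (J t) with (J t / (m * l) * (m * l)) by (field; lra). nra. }
  destruct Hend as [Hs|Hs].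
  - assert (Hm : Rmin t (1 - t) = t) by (apply Rmin_left; lra).
    rewrite Hm in *. apply Hr; [lra|]. apply H1; auto; lra.
  - assert (Hm : Rmin t (1 - t) = 1 - t) by (apply Rmin_right; lra).
    rewrite Hm in *. apply Hr; [lra|]. apply H2; auto; lra.
Qed.

Lemma J_comparable_LPhi : Phi 0 < ln 2 -> exists k1 k2, 0 < k1 /\ 0 < k2 /\
  forall t L, 0 <= t <= 1 -> LPhi Phi t L -> k1 * L <= J t <= k2 * L.
Proof.
  intros Hln2.
  destruct J_comparable_near_ends as [d [Hd Hends]].
  destruct (J_bounded_middle d Hd) as [a [b [Ha [Hb Hmid]]]].
  destruct (rderiv_level_bounds (ln 2) (ln (/ d)) Hln2) as [lmin [lmax [Hlmin [Hlmax Hlev]]]].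
  set (k1 := Rmin (1/2) (a / (lmax + 1))).
  set (k2 := Rmax (3/2) (b / (d * lmin))).
  assert (Hk1 : 0 < k1 <= 1/2 /\ k1 <= a / (lmax + 1)).
  { unfold k1. pose proof (Rmin_l (1/2) (a / (lmax + 1))). pose proof (Rmin_r (1/2) (a / (lmax + 1))).
    assert (0 < a / (lmax + 1)) by (apply Rdiv_lt_0_compat; lra).
    pose proof (Rmin_pos (1/2) (a / (lmax + 1)) ltac:(lra) ltac:(lra)). lra. }
  assert (Hk2 : 3/2 <= k2 /\ b / (d * lmin) <= k2) by (split; [apply Rmax_l|apply Rmax_r]).
  exists k1, k2. split; [lra|]. split; [lra|].
  intros t L Ht [[Ht01 HL0] | [Ht01 [l [Hl HL]]]].
  { subst L. destruct Ht01 as [-> | ->]; [rewrite HJ0|rewrite HJ1]; lra. }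
  destruct (Rmin_compl_bounds t Ht01) as [Hm Hml].
  set (m := Rmin t (1 - t)) in *.
  assert (Hl0 : 0 < l) by (destruct Hl as [y [Hy [_ Hy']]]; apply (Phi_rderiv_pos y); auto).
  assert (HL0 : 0 < L) by (rewrite HL; nra).
  assert (Hk : k1 * L <= L / 2 /\ 3 / 2 * L <= k2 * L) by (split; nra).
  (* Near the endpoints use the asymptotics; in the middle m, Phi' and J are
     all bounded above and away from 0. *)
  destruct (Rlt_le_dec t d) as [Hs|Hs];
    [|destruct (Rlt_le_dec (1 - d) t) as [Hs'|Hs']].
  - pose proof (Hends t l Ht01 (or_introl Hs) Hl) as Hend.
    fold m in Hend. rewrite <- HL in Hend. lra.
  - pose proof (Hends t l Ht01 (or_intror Hs') Hl) as Hend.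
    fold m in Hend. rewrite <- HL in Hend. lra.
  - assert (Hdm : d <= m) by (unfold m, Rmin; destruct (Rle_dec t (1 - t)); lra).
    destruct Hl as [y [Hy [HyE Hy']]].
    assert (Hlev' : ln (/ m) <= ln (/ d))
      by (apply ln_le; [apply Rinv_0_lt_compat; lra|apply Rinv_le_contravar; lra]).
    destruct (Hlev y l Hy ltac:(lra) Hy') as [Hl1 Hl2].
    destruct (Hmid t ltac:(lra)) as [HJa HJb].
    rewrite HL. split.
    + assert (Hlow : k1 * (m * l) <= a / (lmax + 1) * (lmax + 1))
        by (apply Rmult_le_compat; nra).
      replace (a / (lmax + 1) * (lmax + 1)) with a in Hlow by (field; lra). lra.
    + assert (Hhigh : b / (d * lmin) * (d * lmin) <= k2 * (m * l)).
      { apply Rmult_le_compat; try nra. left; apply Rdiv_lt_0_compat; nra. }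
      replace (b / (d * lmin) * (d * lmin)) with b in Hhigh by (field; nra). lra.
Qed.

End RegularTail.

End ConcaveProfile.

Theorem mainTheorem16 (Phi : R -> R)
  (* non-decreasing on R+ *)
  (Hmono : forall x y, 0 <= x -> x <= y -> Phi x <= Phi y)
  (* concave on R+ *)
  (Hconc : forall x y lam, 0 <= x -> 0 <= y -> 0 <= lam <= 1 ->
      lam * Phi x + (1 - lam) * Phi y <= Phi (lam * x + (1 - lam) * y))
  (* continuity at 0 *)
  (Hcont0 : forall eps, 0 < eps -> exists d, 0 < d /\
      forall x, 0 <= x < d -> Rabs (Phi x - Phi 0) < eps)
  (* Phi(x)/x -> 0 at +oo *)
  (Hsub : forall eps, 0 < eps -> exists M, forall x, M < x -> Rabs (Phi x / x) < eps)
  (* C^2 near +oo and Phi^theta convex near +oo, for some theta > 1 *)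
  (Hinf : exists A theta Phi1 Phi2, 1 < theta /\
      (forall x, A < x -> 0 < Phi x) /\
      (forall x, A < x -> derivable_pt_lim Phi x (Phi1 x) /\
                          derivable_pt_lim Phi1 x (Phi2 x) /\ continuity_pt Phi2 x) /\
      (forall x y lam, A < x -> A < y -> 0 <= lam <= 1 ->
         Rpower (Phi (lam * x + (1 - lam) * y)) theta <=
         lam * Rpower (Phi x) theta + (1 - lam) * Rpower (Phi y) theta))
  (* Z_Phi = int_R exp(-Phi(|x|)) dx, finite *)
  (Z : R) (HZ : int_full (dens Phi) Z)
  (* F = F_{mu_Phi} *)
  (F : R -> R) (HF : forall x, int_lower (dens Phi) x (Z * F x))
  (* G = F^{-1} on (0,1) *)
  (G : R -> R) (HG : forall t, 0 < t < 1 -> F (G t) = t)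
  (* J = J_{mu_Phi} = F' o F^{-1} on (0,1), extended by 0 at 0 and 1 *)
  (J : R -> R) (HJ0 : J 0 = 0) (HJ1 : J 1 = 0)
  (HJ : forall t, 0 < t < 1 -> derivable_pt_lim F (G t) (J t)) :
  ( (exists d, 0 < d /\ forall t, 0 < t < d -> exists l, dPhi_inv Phi (ln (/ t)) l) /\
    (forall eps, 0 < eps -> exists d, 0 < d /\
       forall t l, 0 < t < d -> dPhi_inv Phi (ln (/ t)) l ->
         Rabs (J t / (t * l) - 1) < eps) ) /\
  ( Phi 0 < ln 2 ->
    (forall t, 0 <= t <= 1 -> exists L, LPhi Phi t L) /\
    exists k1 k2, 0 < k1 /\ 0 < k2 /\
      forall t L, 0 <= t <= 1 -> LPhi Phi t L -> k1 * L <= J t <= k2 * L ).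
Proof.
  destruct Hinf as [A0 [th [Phi1 [Phi2 [Hth [HApos [HAd HAconv]]]]]]].
  pose proof (Rmax_l A0 0) as HA1. pose proof (Rmax_r A0 0) as HA2.
  set (A := Rmax A0 0) in *.
  assert (HApos' : forall x, A < x -> 0 < Phi x) by (intros; apply HApos; lra).
  assert (HPhi1 : forall x, A < x -> derivable_pt_lim Phi x (Phi1 x))
    by (intros x Hx; apply (HAd x ltac:(lra))).
  assert (HPhi2 : forall x, A < x -> derivable_pt_lim Phi1 x (Phi2 x))
    by (intros x Hx; apply (HAd x ltac:(lra))).
  assert (Hconv : forall x y lam, A < x -> A < y -> 0 <= lam <= 1 ->
    Rpower (Phi (lam * x + (1 - lam) * y)) th <=
    lam * Rpower (Phi x) th + (1 - lam) * Rpower (Phi y) th)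
    by (intros; apply HAconv; lra).
  split; [split|].
  - exact (dPhi_inv_exists_small Phi Hmono Hconc Hcont0 Z HZ).
  - intros eps Heps.
    destruct (J_ratio_left Phi Hmono Hconc Hcont0 Z HZ F HF G J HG HJ A th Phi1 Phi2
      HA2 Hth HApos' HPhi1 HPhi2 Hconv Hsub eps Heps) as [d [Hd Hratio]].
    exists d; split; [lra|exact Hratio].
  - intros Hln2. split.
    + exact (LPhi_defined Phi Hmono Hconc Hcont0 Z HZ Hln2).
    + exact (J_comparable_LPhi Phi Hmono Hconc Hcont0 Z HZ F HF G J HG HJ0 HJ1 HJ A th
        Phi1 Phi2 HA2 Hth HApos' HPhi1 HPhi2 Hconv Hsub Hln2).
Qed.
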